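(* Let $(G,\prec)$ be a POP-graph. (1) For every $i\in I(G)$ and $e\in E(G)\setminus I(G)$: $i^-(e)\preceq i\preceq i^+(e)$ if and only if $i\to e$. (2) For every $o\in O(G)$ and $e\in E(G)\setminus O(G)$: $o^-(e)\preceq o\preceq o^+(e)$ if and only if $e\to o$.
   Context: A progressive graph is a finite directed acyclic graph (parallel edges allowed) in which every source and every sink has degree one; degree-one vertices are boundary vertices. $I(G)$ is the set of input edges (initial vertex a boundary vertex), $O(G)$ the set of output edges (terminal vertex a boundary vertex). For edges write $e\to e'$ if $e\neq e'$ and there is a directed path whose first edge is $e$ and last edge is $e'$. A planar order on $G$ is a linear order $\prec$ on $E(G)$ such that (P1) $e_1\to e_2$ implies $e_1\prec e_2$; (P2) if $e_1\prec e_2\prec e_3$ and $e_1\to e_3$ then $e_1\to e_2$ or $e_2\to e_3$. A POP-graph is a progressive graph with a planar order. For an edge $e$, $i^-(e)$ and $i^+(e)$ are the $\prec$-minimum and $\prec$-maximum of $\{i\in I(G): i\to e\}$, and $o^-(e)$, $o^+(e)$ are the $\prec$-minimum and $\prec$-maximum of $\{o\in O(G): e\to o\}$. *)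

From mathcomp Require Import all_boot.
Set Implicit Arguments. Unset Strict Implicit. Unset Printing Implicit Defensive.

(* A finite directed graph (parallel edges allowed) is given by finite types of
   vertices V and edges E with source/target maps src, tgt : E -> V. *)
Section POP.
Variables (V E : finType) (src tgt : E -> V).

Definition indeg (v : V) : nat := #|[pred e | tgt e == v]|.
Definition outdeg (v : V) : nat := #|[pred e | src e == v]|.
Definition deg (v : V) : nat := indeg v + outdeg v.
Definition boundary (v : V) : bool := deg v == 1.

Definition succ_rel : rel E := fun a b => tgt a == src b.

Definition arrow (e e' : E) : bool := (e != e') && connect succ_rel e e'.

Definition acyclic : Prop :=
  forall e1 e2, succ_rel e1 e2 -> ~~ connect succ_rel e2 e1.

Definition progressive : Prop :=
  [/\ acyclic,
      (forall v, indeg v = 0 -> deg v = 1) &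
      (forall v, outdeg v = 0 -> deg v = 1)].

Definition is_input (e : E) : bool := boundary (src e).
Definition is_output (e : E) : bool := boundary (tgt e).

Variable le : rel E.

Definition linear_order : Prop :=
  [/\ reflexive le, antisymmetric le, transitive le & total le].

Definition lt (e e' : E) : bool := (e != e') && le e e'.

Definition planar_order : Prop :=
  [/\ linear_order,
      (forall e1 e2, arrow e1 e2 -> lt e1 e2) &
      (forall e1 e2 e3, lt e1 e2 -> lt e2 e3 -> arrow e1 e3 ->
          arrow e1 e2 || arrow e2 e3)].

Definition in_pred (e : E) : pred E := [pred i | is_input i && arrow i e].
Definition out_pred (e : E) : pred E := [pred o | is_output o && arrow e o].

Definition min_of (P : pred E) : option E :=
  [pick x | P x && [forall y, P y ==> le x y]].
Definition max_of (P : pred E) : option E :=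
  [pick x | P x && [forall y, P y ==> le y x]].

Definition i_minus e := min_of (in_pred e).
Definition i_plus e := max_of (in_pred e).
Definition o_minus e := min_of (out_pred e).
Definition o_plus e := max_of (out_pred e).

Definition between (a b : option E) (x : E) : bool :=
  match a, b with
  | Some a, Some b => le a x && le x b
  | _, _ => false
  end.
End POP.

From mathcomp Require Import all_boot.
Set Implicit Arguments. Unset Strict Implicit. Unset Printing Implicit Defensive.

(* The argument uses only that nothing reaches an input edge and nothing is
   reached from an output edge, together with the two planarity axioms.  If
   [a -> e] and [b -> e] and [a <= x <= b], then either [x < e], and (P2)
   applied to [a < x < e] gives [a -> x] or [x -> e], or [e <= x <= b < e],
   which is absurd.  For outputs apply the same argument to the reversed
   graph, whose reversed order is again planar. *)

Section MinMax.
Variables (T : finType) (le : rel T).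
Hypothesis le_linear : linear_order le.

Lemma min_of_Some (P : pred T) m :
  min_of le P = Some m -> P m /\ {in P, forall y, le m y}.
Proof.
rewrite /min_of; case: pickP => // m' /andP[Pm /forallP minm] [<-].
by split=> // y Py; apply: implyP (minm y) Py.
Qed.

Lemma min_of_exists (P : pred T) x : P x -> exists m, min_of le P = Some m.
Proof.
case: le_linear => le_refl _ le_trans le_total Px.
rewrite /min_of; case: pickP => [m _|noMin]; first by exists m.
have: x \in sort le (enum P) by rewrite mem_sort mem_enum.
case Es: (sort le (enum P)) => [//|m s] _.
have sorted_ms : sorted le (m :: s) by rewrite -Es sort_sorted.
have mem_s y : (y \in m :: s) = P y by rewrite -Es mem_sort mem_enum.
have := noMin m; rewrite -mem_s mem_head /= => /forallP[] y.
apply/implyP; rewrite -mem_s in_cons => /predU1P[->|ys]; first exact: le_refl.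
by have /allP := order_path_min le_trans sorted_ms; apply.
Qed.

End MinMax.

Lemma linear_order_rev (T : finType) (le : rel T) :
  linear_order le -> linear_order (fun x y => le y x).
Proof.
case=> le_refl le_anti le_trans le_total; split.
- exact: le_refl.
- by move=> x y; rewrite andbC; apply: le_anti.
- by move=> y x z /= yx zy; apply: le_trans zy yx.
- by move=> x y; rewrite orbC.
Qed.

Lemma between_rev (T : finType) (le : rel T) a b x :
  between (fun u v => le v u) b a x = between le a b x.
Proof. by case: a b => [a|] [b|] //=; rewrite andbC. Qed.

Definition planar_rel (T : finType) (le arr : rel T) : Prop :=
  [/\ linear_order le,
      (forall e1 e2, arr e1 e2 -> lt le e1 e2) &
      (forall e1 e2 e3, lt le e1 e2 -> lt le e2 e3 -> arr e1 e3 ->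
          arr e1 e2 || arr e2 e3)].

Lemma planar_rel_rev (T : finType) (le arr : rel T) :
  planar_rel le arr -> planar_rel (fun x y => le y x) (fun x y => arr y x).
Proof.
rewrite /planar_rel /lt; case=> le_lin arr_lt P2; split.
- exact: linear_order_rev.
- by move=> e1 e2 /arr_lt; rewrite eq_sym.
- move=> e1 e2 e3 /= /andP[n12 l21] /andP[n23 l32] a31.
  rewrite orbC; apply: P2 a31; apply/andP; split=> //; by rewrite eq_sym.
Qed.

Section Planar.
Variables (T : finType) (le arr : rel T).
Hypothesis planar : planar_rel le arr.

Lemma planar_arrow_convex a b x e :
  arr a e -> arr b e -> le a x -> le x b -> ~~ arr a x -> arr x e.
Proof.
case: planar => [[le_refl le_anti le_trans le_total] arr_lt P2].
move=> ae be ax xb nreach; have [<-//|nax] := eqVneq a x.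
have not_eb : ~~ le e b.
  apply/negP => eb; have /andP[nbe bE] := arr_lt b e be.
  have := le_anti b e; rewrite bE eb => /(_ isT) beq.
  by rewrite beq eqxx in nbe.
have [xe|] := boolP (lt le x e).
  have := P2 a x e; rewrite /lt nax ax => /(_ isT xe ae).
  by rewrite (negbTE nreach).
rewrite /lt negb_and negbK => /orP[/eqP xe|nxe].
  by rewrite -xe xb in not_eb.
have ex : le e x by case/orP: (le_total x e) => //; rewrite (negbTE nxe).
by rewrite (le_trans _ _ _ ex xb) in not_eb.
Qed.

Lemma between_arrow (bnd : pred T) x e :
  (forall a y, bnd y -> ~~ arr a y) -> bnd x ->
  between le (min_of le [pred y | bnd y && arr y e])
             (max_of le [pred y | bnd y && arr y e]) x <-> arr x e.
Proof.
have le_lin : linear_order le by case: planar.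
have le_rev := linear_order_rev le_lin.
move=> unreached bx; set P := [pred y | bnd y && arr y e].
split.
- rewrite /between; case Ea: (min_of le P) => [a|//].
  case Eb: (max_of le P) => [b|//] /andP[ax xb].
  have [/andP[_ ae] _] := min_of_Some Ea.
  have [/andP[_ be] _] := min_of_Some (le := fun u v => le v u) Eb.
  exact: planar_arrow_convex ae be ax xb (unreached a x bx).
- move=> xe; have Px : P x by rewrite inE bx xe.
  have [a Ea] := min_of_exists le_lin Px.
  have [b Eb] := min_of_exists le_rev Px.
  rewrite /between Ea -[max_of le P]/(min_of (fun u v => le v u) P) Eb.
  have [_ -> //] := min_of_Some Ea.
  by have [_ ->] := min_of_Some (le := fun u v => le v u) Eb.
Qed.

End Planar.

Section Boundary.
Variables (V E : finType) (src tgt : E -> V).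

Lemma boundary_in_out a b v :
  tgt a = v -> src b = v -> ~~ boundary src tgt v.
Proof.
move=> ta sb.
have in_pos : 0 < indeg tgt v by apply/card_gt0P; exists a; rewrite inE ta.
have out_pos : 0 < outdeg src v by apply/card_gt0P; exists b; rewrite inE sb.
apply/negP => /eqP deg1; have := leq_add in_pos out_pos.
by move: deg1; rewrite /deg => ->.
Qed.

Lemma arrow_to_input a i : is_input src tgt i -> ~~ arrow src tgt a i.
Proof.
move=> bi; apply/negP => /andP[nai /connectP[p]].
case/lastP: p => [_ ai|p c]; first by rewrite ai eqxx in nai.
rewrite rcons_path last_rcons => /andP[_ /eqP tc] ci.
rewrite -ci in tc.
by move: bi; rewrite /is_input (negbTE (boundary_in_out tc erefl)).
Qed.

Lemma arrow_from_output o b : is_output src tgt o -> ~~ arrow src tgt o b.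
Proof.
move=> bo; apply/negP => /andP[nob /connectP[[_ ob|c p]]].
  by rewrite ob eqxx in nob.
rewrite /= => /andP[/eqP sc _] _.
by move: bo; rewrite /is_output (negbTE (boundary_in_out erefl (esym sc))).
Qed.

End Boundary.

Theorem lemma3p2 (V E : finType) (src tgt : E -> V) (le : rel E)
  (Hprog : progressive src tgt) (Hplan : planar_order src tgt le) :
  (forall i e : E, is_input src tgt i -> ~~ is_input src tgt e ->
     (between le (i_minus src tgt le e) (i_plus src tgt le e) i
      <-> arrow src tgt i e)) /\
  (forall o e : E, is_output src tgt o -> ~~ is_output src tgt e ->
     (between le (o_minus src tgt le e) (o_plus src tgt le e) o
      <-> arrow src tgt e o)).
Proof.
have planar : planar_rel le (arrow src tgt) := Hplan.
split=> [i e input_i _ | o e output_o _].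
- apply: (@between_arrow _ _ _ planar (is_input src tgt) i e) input_i => a y.
  exact: arrow_to_input.
- rewrite -between_rev.
  apply: (@between_arrow _ _ _ (planar_rel_rev planar) (is_output src tgt) o e)
    output_o => a y.
  exact: arrow_from_output.
Qed.
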